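(* Let $X$ be a type and $\sim:X\to X\to\mathbb P$ a decidable equivalence relation. Suppose we are given a list $l_r$ over $X$ such that every $x:X$ has some $y\in l_r$ with $x\sim y$. Then one can compute $n:\mathbb N$ and functions $c:X\to\mathrm{Fin}\,n$ and $r:\mathrm{Fin}\,n\to X$ such that: <ul> <li>$c(r\,p)=p$ for all $p:\mathrm{Fin}\,n$;</li> <li>$x\sim y\leftrightarrow c\,x=c\,y$ for all $x,y:X$.</li> </ul>
   Context: This is stated in constructive type theory, where ''one can compute'' means the data is constructed in $\mathsf{Type}$ rather than merely proved to exist. The list $l_r$ is given as data. $\mathrm{Fin}\,n$ is the finite type $\{0,\dots,n-1\}$. A relation is decidable if a Boolean-valued function characterises it. *)

From mathcomp Require Import all_boot.
From Stdlib Require Import List.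
Set Implicit Arguments. Unset Strict Implicit. Unset Printing Implicit Defensive.

From Stdlib Require Import List.
From mathcomp Require Import all_boot.

Set Implicit Arguments.
Unset Strict Implicit.
Unset Printing Implicit Defensive.

(* Sieve the covering list down to pairwise inequivalent representatives
   that still cover X.  The class of x is the index of the first
   representative equivalent to x; this respects the relation by
   transitivity, separates inequivalent elements because every element is
   equivalent to the representative found for it, and maps the p-th
   representative back to p because no earlier one is equivalent to it. *)

Section Quotient.

Variables (X : Type) (eqv : rel X).
Hypotheses (eqv_refl : reflexive eqv) (eqv_sym : symmetric eqv)
  (eqv_trans : transitive eqv).

Fixpoint class_reps (l : list X) : seq X :=
  if l is a :: l' then
    let s := class_reps l' in if has (eqv a) s then s else a :: s
  else [::].

Lemma class_reps_pairwise l : pairwise (fun a b => ~~ eqv a b) (class_reps l).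
Proof.
elim: l => [|a l IHl] //=; case: ifP => // not_has /=.
by rewrite IHl andbT all_predC not_has.
Qed.

Lemma class_reps_cover l y : List.In y l -> has (eqv y) (class_reps l).
Proof.
elim: l => [|a l IHl] //= [<-|/IHl has_y].
  by case: ifP => // _ /=; rewrite eqv_refl.
by case: ifP => // _ /=; rewrite has_y orbT.
Qed.

Section ClassIndex.

Variable s : seq X.
Hypothesis s_apart : pairwise (fun a b => ~~ eqv a b) s.
Hypothesis s_cover : forall x, has (eqv x) s.

Lemma find_eqv_lt x : find (eqv x) s < size s.
Proof. by rewrite -has_find. Qed.

Definition class_of (x : X) : 'I_(size s) := Ordinal (find_eqv_lt x).

Definition class_rep (p : 'I_(size s)) : X := tnth (in_tuple s) p.

Lemma eqv_class_rep x : eqv x (class_rep (class_of x)).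
Proof. by rewrite /class_rep (tnth_nth x) nth_find. Qed.

Lemma find_eqv_nth x0 p : p < size s -> find (eqv (nth x0 s p)) s = p.
Proof.
elim: s s_apart p => [|a t IHt] //= /andP[a_apart t_apart] [|p] p_lt /=.
  by rewrite eqv_refl.
have /negbTE-> : ~~ eqv (nth x0 t p) a.
  by rewrite eqv_sym; apply: (all_nthP x0 a_apart).
by rewrite IHt.
Qed.

Lemma class_repK : cancel class_rep class_of.
Proof. by move=> p; apply: val_inj; rewrite /= /class_rep (tnth_nth (class_rep p)) find_eqv_nth. Qed.

Lemma eqv_class_of x y : eqv x y = (class_of x == class_of y).
Proof.
apply/idP/eqP => [xy | cxy].
  apply: val_inj; apply: eq_find => z.
  by apply/idP/idP; apply: eqv_trans; rewrite // eqv_sym.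
apply: eqv_trans (eqv_class_rep x) _.
by rewrite cxy eqv_sym eqv_class_rep.
Qed.

End ClassIndex.

End Quotient.

Theorem theorem9 (X : Type) (R : X -> X -> Prop)
  (R_refl : forall x, R x x)
  (R_sym : forall x y, R x y -> R y x)
  (R_trans : forall x y z, R x y -> R y z -> R x z)
  (dec : X -> X -> bool) (dec_spec : forall x y, R x y <-> dec x y = true)
  (lr : list X) (lr_cover : forall x, exists y, List.In y lr /\ R x y) :
  {n : nat & {c : X -> 'I_n & {r : 'I_n -> X |
     (forall p : 'I_n, c (r p) = p) /\
     (forall x y : X, R x y <-> c x = c y)}}}.
Proof.
have dec_refl : reflexive dec by move=> x; apply/dec_spec.
have dec_sym : symmetric dec.
  by move=> x y; apply/idP/idP => /dec_spec/R_sym/dec_spec.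
have dec_trans : transitive dec.
  by move=> y x z /dec_spec xy /dec_spec yz; apply/dec_spec; apply: R_trans yz.
pose s := class_reps dec lr.
have s_cover x : has (dec x) s.
  have [y [lr_y /dec_spec xy]] := lr_cover x.
  by apply: sub_has (class_reps_cover dec_refl lr_y) => z; apply: dec_trans.
exists (size s), (class_of s_cover), (@class_rep _ s); split.
  exact: (class_repK dec_refl dec_sym (class_reps_pairwise dec lr) s_cover).
move=> x y; apply: iff_trans (dec_spec x y) _.
by rewrite (eqv_class_of dec_sym dec_trans s_cover); split=> /eqP.
Qed.
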